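(* Suppose Assumption A and Assumption B (defined in the context) hold for the dynamic accuracy DFO algorithm described in the context, with criticality parameter $\epsilon>0$. Let $k_\epsilon$ be such that $\|\nabla f(\theta^k)\|\ge\epsilon$ for all $k=0,\ldots,k_\epsilon$ and $k_\epsilon+1$ is the first index $k$ with $\|\nabla f(\theta^k)\|<\epsilon$. Let $\mathcal{S}_\epsilon$ be the set of iterations $k\in\{0,\ldots,k_\epsilon\}$ which are successful, i.e. $\tilde\rho^k\ge\eta_2$, or $\tilde\rho^k\ge\eta_1$ and $m^k$ is fully linear in $B(\theta^k,\Delta^k)$. Then $$|\mathcal{S}_\epsilon|\le\frac{2(\kappa_{\rm eg}+1)f(\theta^0)}{(\eta_1-2\eta_1')\epsilon\Delta_{\min}}.$$
   Context: Setting. Let $n,d\ge 1$ and $r=(r_1,\ldots,r_n):\mathbb{R}^d\to\mathbb{R}^n$, with objective $f(\theta)=\frac1n\|r(\theta)\|^2=\frac1n\sum_{i=1}^n r_i(\theta)^2$ (Euclidean norm). In the application, $r_i(\theta)=\|\hat x_i(\theta)-x_i\|$ where $\hat x_i(\theta)$ is the minimizer of a lower-level problem that can only be computed approximately. The algorithm never sees $r$ exactly: for any $\theta$ it can compute an approximation $\tilde r(\theta)$ (in the application $\tilde r_i(\theta)=\|\tilde x_i(\theta)-x_i\|$ with $\tilde x_i(\theta)$ an approximate minimizer whose error can be made as small as desired), and sets $\tilde f(\theta)=\frac1n\|\tilde r(\theta)\|^2$. We say $\tilde f(\theta)$ is evaluated with accuracy $\delta$ if $|\tilde f(\theta)-f(\theta)|\le\delta$.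 Models. At iteration $k$ the algorithm holds an iterate $\theta^k$, a radius $\Delta^k>0$, and interpolation points $z^0=\theta^k,z^1,\ldots,z^d\in\mathbb{R}^d$ with $z^1-\theta^k,\ldots,z^d-\theta^k$ linearly independent; $J^k\in\mathbb{R}^{n\times d}$ is the unique matrix with $\tilde r(\theta^k)+J^k(z^t-\theta^k)=\tilde r(z^t)$ for $t=1,\ldots,d$. Set $M^k(s)=\tilde r(\theta^k)+J^k s$ and $m^k(s)=\frac1n\|M^k(s)\|^2=\tilde f(\theta^k)+(g^k)^Ts+\frac12 s^TH^ks$ with $g^k=\frac2n (J^k)^T\tilde r(\theta^k)$, $H^k=\frac2n(J^k)^TJ^k$. Fixed constants $\kappa_{\rm ef},\kappa_{\rm eg}>0$ (independent of $k,\theta^k,\Delta^k$) are given, and $m^k$ is called fully linear in $B(\theta^k,\Delta^k)$ if $|f(\theta^k+s)-m^k(s)|\le\kappa_{\rm ef}(\Delta^k)^2$ and $\|\nabla f(\theta^k+s)-\nabla m^k(s)\|\le\kappa_{\rm eg}\Delta^k$ for all $\|s\|\le\Delta^k$. The algorithm has a procedure which, by replacing interpolation points, makes the model fully linear in a given ball. Algorithm. Parameters: $\Delta_{\max}>0$, $0<\gamma_{\rm dec}<1<\gamma_{\rm inc}$, $0<\eta_1\le\eta_2<1$, $0<\eta_1'<\min(\eta_1,1-\eta_2)/2$, $\epsilon>0$; inputs $\theta^0\in\mathbb{R}^d$, $0<\Delta^0\le\Delta_{\max}$. Build an initial model $m^0$ from an arbitrary interpolation set. For $k=0,1,2,\ldots$: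 (1) [accuracy phase] repeat: (a) except on the first pass, re-evaluate $\tilde f(\theta^k)$ with accuracy $\delta^k\le\eta_1'[m^k(0)-m^k(s^k)]$ using the $s^k$ from the previous pass; (b) [criticality phase] if $\|g^k\|\le\epsilon$, replace $\Delta^k$ by $\gamma_{\rm dec}^i\Delta^k$ for $i=0,1,2,\ldots$ (making the model fully linear in the current ball) until $m^k$ is fully linear in $B(\theta^k,\Delta^k)$ and $\Delta^k\le\|g^k\|$; (c) compute $s^k$ with $\|s^k\|\le\Delta^k$ approximately minimizing $m^k$ over that ball; until $\tilde f(\theta^k)$ has been evaluated with accuracy $\delta^k\le\eta_1'[m^k(0)-m^k(s^k)]$. (2) Evaluate $\tilde f(\theta^k+s^k)$ with accuracy $\delta^k_+\le\eta_1'[m^k(0)-m^k(s^k)]$ and set $\tilde\rho^k=\frac{\tilde f(\theta^k)-\tilde f(\theta^k+s^k)}{m^k(0)-m^k(s^k)}$. (3) Set $\theta^{k+1}=\theta^k+s^k$ if $\tilde\rho^k\ge\eta_2$, or if $\tilde\rho^k\ge\eta_1$ and $m^k$ is fully linear in $B(\theta^k,\Delta^k)$; otherwise $\theta^{k+1}=\theta^k$. Set $\Delta^{k+1}=\min(\gamma_{\rm inc}\Delta^k,\Delta_{\max})$ if $\tilde\rho^k\ge\eta_2$; $\Delta^{k+1}=\Delta^k$ if $\tilde\rho^k<\eta_2$ and $m^k$ is not fully linear in $B(\theta^k,\Delta^k)$; $\Delta^{k+1}=\gamma_{\rm dec}\Delta^k$ otherwise. (4) If $\theta^{k+1}=\theta^k+s^k$,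 form $m^{k+1}$ by adding $\theta^{k+1}$ to the interpolation set (removing an existing point); otherwise set $m^{k+1}=m^k$ if $m^k$ is fully linear in $B(\theta^k,\Delta^k)$, else form $m^{k+1}$ by making $m^k$ fully linear in $B(\theta^{k+1},\Delta^{k+1})$. Assumption A: the set $\mathcal{B}=\{z: \|z-\theta\|\le\Delta_{\max}\text{ for some }\theta\text{ with }f(\theta)\le f(\theta^0)\}$ is bounded, and $r$ is continuously differentiable on $\mathcal{B}$ with $\partial r$ Lipschitz continuous with constant $L_J$ on $\mathcal{B}$. Assumption B: for all $k$, $m^k(0)-m^k(s^k)\ge\frac12\|g^k\|\min\left(\Delta^k,\frac{\|g^k\|}{\|H^k\|+1}\right)$, and there is $\kappa_H\ge1$ with $\|H^k\|+1\le\kappa_H$ for all $k$. Constants: $c_0:=\min\left(\frac{1-\eta_2-2\eta_1'}{4\kappa_{\rm ef}},\frac{1}{\kappa_H}\right)$ and $\Delta_{\min}:=\gamma_{\rm dec}\min\left(\Delta^0,\frac{c_0\epsilon}{\kappa_{\rm eg}+1},\frac{\gamma_{\rm dec}\epsilon}{\kappa_{\rm eg}+1}\right)$. *)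

From HB Require Import structures.
From mathcomp Require Import all_boot all_order all_algebra.
From mathcomp Require Import all_classical all_reals all_analysis.
Set Implicit Arguments. Unset Strict Implicit. Unset Printing Implicit Defensive.
Import Order.TTheory GRing.Theory Num.Theory.
Import numFieldNormedType.Exports.
Local Open Scope classical_set_scope.
Local Open Scope ring_scope.

Section DFO.
Variable R : realType.

Definition enorm (m : nat) (v : 'cV[R]_m) : R :=
  Num.sqrt (\sum_(i < m) v i 0 ^+ 2).

Definition opnorm (p q : nat) (A : 'M[R]_(p, q)) : R :=
  sup [set enorm (A *m v) | v in [set v : 'cV[R]_q | enorm v = 1]].

(* Objective f(theta) = 1/n ||r(theta)||^2 (also used for ftilde with rtilde). *)
Definition obj (n d : nat) (r : 'cV[R]_d -> 'cV[R]_n) (th : 'cV[R]_d) : R :=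
  n%:R^-1 * enorm (r th) ^+ 2.

Definition grad (d : nat) (f : 'cV[R]_d -> R) (x : 'cV[R]_d) : 'cV[R]_d :=
  \col_(i < d) ('d f x (delta_mx i 0 : 'cV[R]_d)).

Definition jac (n d : nat) (r : 'cV[R]_d -> 'cV[R]_n) (x : 'cV[R]_d)
  : 'M[R]_(n, d) :=
  \matrix_(i < n, j < d) ('d r x (delta_mx j 0 : 'cV[R]_d)) i 0.

(* The Gauss-Newton type model built from rt = rtilde(theta^k) and J = J^k:
   M(s) = rt + J s,  m(s) = 1/n ||M(s)||^2,
   g = 2/n J^T rt,  H = 2/n J^T J,  grad m(s) = g + H s. *)
Definition mdl (n d : nat) (rt : 'cV[R]_n) (J : 'M[R]_(n, d)) (s : 'cV[R]_d) : R :=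
  n%:R^-1 * enorm (rt + J *m s) ^+ 2.
Definition gmdl (n d : nat) (rt : 'cV[R]_n) (J : 'M[R]_(n, d)) : 'cV[R]_d :=
  (2 / n%:R) *: (J^T *m rt).
Definition Hmdl (n d : nat) (J : 'M[R]_(n, d)) : 'M[R]_d :=
  (2 / n%:R) *: (J^T *m J).
Definition grad_mdl (n d : nat) (rt : 'cV[R]_n) (J : 'M[R]_(n, d))
  (s : 'cV[R]_d) : 'cV[R]_d :=
  gmdl rt J + Hmdl J *m s.

Definition fully_linear (n d : nat) (r : 'cV[R]_d -> 'cV[R]_n)
  (kef keg : R) (rt : 'cV[R]_n) (J : 'M[R]_(n, d)) (th : 'cV[R]_d) (D : R)
  : Prop :=
  forall s : 'cV[R]_d, enorm s <= D ->
    `|obj r (th + s) - mdl rt J s| <= kef * D ^+ 2 /\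
    enorm (grad (obj r) (th + s) - grad_mdl rt J s) <= keg * D.

Definition interpolates (n d : nat) (rt : 'cV[R]_n) (J : 'M[R]_(n, d))
  (th : 'cV[R]_d) : Prop :=
  exists (z : 'I_d -> 'cV[R]_d) (rz : 'I_d -> 'cV[R]_n),
    (\matrix_(i < d, t < d) (z t - th) i 0) \in unitmx /\
    forall t, rt + J *m (z t - th) = rz t.

Record dfo_params := DfoParams {
  Dmax : R; gdec : R; ginc : R; eta1 : R; eta2 : R; eta1' : R; eps : R;
  kef : R; keg : R }.

Definition params_ok (P : dfo_params) : Prop :=
  0 < Dmax P /\ 0 < gdec P < 1 /\ 1 < ginc P /\
  0 < eta1 P /\ eta1 P <= eta2 P /\ eta2 P < 1 /\
  0 < eta1' P /\ eta1' P < Num.min (eta1 P) (1 - eta2 P) / 2 /\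
  0 < eps P /\ 0 < kef P /\ 0 < keg P.

Section Run.
Variables (n d : nat) (r : 'cV[R]_d -> 'cV[R]_n) (P : dfo_params).

(* A run of the algorithm, recorded by the state at the END of the accuracy
   phase (step 1) of each iteration k:
   th k   = theta^k,
   D0 k   = the radius Delta^k with which iteration k starts (set by step 3
            of iteration k-1, or Delta^0),
   D k    = the radius Delta^k after the criticality phase(s),
   rt k   = rtilde(theta^k) (final evaluation), so ftilde(theta^k) = m^k(0),
   J k    = J^k (final model),
   s k    = s^k,
   fp k   = ftilde(theta^k + s^k) computed in step 2. *)
Record dfo_trace := DfoTrace {
  th : nat -> 'cV[R]_d; D0 : nat -> R; D : nat -> R;
  rt : nat -> 'cV[R]_n; J : nat -> 'M[R]_(n, d);
  s : nat -> 'cV[R]_d; fp : nat -> R }.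

Variable T : dfo_trace.

Definition mk (k : nat) (x : 'cV[R]_d) : R := mdl (rt T k) (J T k) x.
Definition gk (k : nat) : 'cV[R]_d := gmdl (rt T k) (J T k).
Definition Hk (k : nat) : 'M[R]_d := Hmdl (J T k).
Definition pred_decr (k : nat) : R := mk k 0 - mk k (s T k).
Definition rho (k : nat) : R := (mk k 0 - fp T k) / pred_decr k.
Definition FL (k : nat) : Prop :=
  fully_linear r (kef P) (keg P) (rt T k) (J T k) (th T k) (D T k).
Definition successful (k : nat) : Prop :=
  eta2 P <= rho k \/ (eta1 P <= rho k /\ FL k).

Definition dfo_run (th0 : 'cV[R]_d) (Delta0 : R) : Prop :=
  th T 0 = th0 /\ D0 T 0 = Delta0 /\
  forall k,
      interpolates (rt T k) (J T k) (th T k) /\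
      (* criticality phase: each reduction of the radius by gdec happened
         because, after making the model fully linear in the current ball,
         its gradient norm was <= eps and < current radius *)
      (exists i : nat, D T k = gdec P ^+ i * D0 T k /\
         forall j, (j < i)%N ->
           exists (rt' : 'cV[R]_n) (J' : 'M[R]_(n, d)),
             fully_linear r (kef P) (keg P) rt' J' (th T k) (gdec P ^+ j * D0 T k)
             /\ enorm (gmdl rt' J') <= eps P
             /\ enorm (gmdl rt' J') < gdec P ^+ j * D0 T k) /\
      (* termination of the criticality phase (last pass) *)
      (enorm (gk k) <= eps P -> FL k /\ D T k <= enorm (gk k)) /\
      enorm (s T k) <= D T k /\
      `|mk k 0 - obj r (th T k)| <= eta1' P * pred_decr k /\
      `|fp T k - obj r (th T k + s T k)| <= eta1' P * pred_decr k /\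
      th T k.+1 = (if `[< successful k >] then th T k + s T k else th T k) /\
      D0 T k.+1 = (if eta2 P <= rho k then Num.min (ginc P * D T k) (Dmax P)
                   else if ~~ `[< FL k >] then D T k
                   else gdec P * D T k).

Definition assumptionA (th0 : 'cV[R]_d) (LJ : R) : Prop :=
  let Bset := [set z : 'cV[R]_d | exists t : 'cV[R]_d,
                 obj r t <= obj r th0 /\ enorm (z - t) <= Dmax P] in
  (exists M : R, forall z, Bset z -> enorm z <= M) /\
  (forall z, Bset z -> differentiable r z) /\
  (forall z1 z2, Bset z1 -> Bset z2 ->
     opnorm (jac r z1 - jac r z2) <= LJ * enorm (z1 - z2)).

Definition assumptionB (kH : R) : Prop :=
  (forall k, pred_decr k >= 2^-1 * enorm (gk k) *
       Num.min (D T k) (enorm (gk k) / (opnorm (Hk k) + 1))) /\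
  1 <= kH /\ (forall k, opnorm (Hk k) + 1 <= kH).

End Run.

Definition c0 (P : dfo_params) (kH : R) : R :=
  Num.min ((1 - eta2 P - 2 * eta1' P) / (4 * kef P)) (kH^-1).

Definition Dmin (P : dfo_params) (kH Delta0 : R) : R :=
  gdec P * Num.min Delta0 (Num.min (c0 P kH * eps P / (keg P + 1))
                                   (gdec P * eps P / (keg P + 1))).

End DFO.

(* While the true gradient stays above eps, full linearity forces the model
   gradient to stay above eps / (keg + 1): either directly at the end of the
   criticality phase, or because that phase only shrinks the radius while the
   radius exceeds the model gradient.  If the model is fully linear and the
   radius is at most c0 ||g||, the model error kef Delta^2 is a small fraction
   of the Cauchy decrease, so the iteration is very successful.  Hence the
   radius is only cut once it is of order c0 eps / (keg + 1), and by induction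
   it never drops below Dmin up to iteration keps.  Every successful iteration
   then decreases f by at least (eta1 - 2 eta1') eps Dmin / (2 (keg + 1)); as
   f >= 0, telescoping bounds their number. *)

From HB Require Import structures.
From mathcomp Require Import all_boot all_order all_algebra.
From mathcomp Require Import all_classical all_reals all_analysis.
From mathcomp Require Import ring lra.
Set Implicit Arguments. Unset Strict Implicit. Unset Printing Implicit Defensive.
Import Order.TTheory GRing.Theory Num.Theory.
Import numFieldNormedType.Exports.
Local Open Scope ring_scope.

Lemma sum_mul_sqr_le (R : realDomainType) (m : nat) (x y : 'I_m -> R) :
  (\sum_i x i * y i) ^+ 2 <= (\sum_i x i ^+ 2) * (\sum_i y i ^+ 2).
Proof.
have lagrange : 0 <= \sum_i \sum_j (x i * y j - x j * y i) ^+ 2.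
  by apply: sumr_ge0 => i _; apply: sumr_ge0 => j _; exact: sqr_ge0.
have expand : \sum_i \sum_j (x i * y j - x j * y i) ^+ 2 =
    \sum_i \sum_j (x i ^+ 2 * y j ^+ 2) + \sum_i \sum_j (x j ^+ 2 * y i ^+ 2)
    - 2 * \sum_i \sum_j ((x i * y i) * (x j * y j)).
  rewrite -big_split mulr_sumr -sumrB /=; apply: eq_bigr => i _.
  rewrite -big_split mulr_sumr -sumrB /=; apply: eq_bigr => j _; ring.
have sum_sum_mul (u v : 'I_m -> R) :
    \sum_i \sum_j (u i * v j) = (\sum_i u i) * (\sum_i v i).
  by rewrite mulr_suml; apply: eq_bigr => i _; rewrite mulr_sumr.
have swap : \sum_i \sum_j (x j ^+ 2 * y i ^+ 2) =
    \sum_i \sum_j (x i ^+ 2 * y j ^+ 2) by exact: exchange_big.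
move: lagrange; rewrite expand swap !sum_sum_mul -expr2; lra.
Qed.

Section EuclideanNorm.
Variables (R : realType) (m : nat).
Implicit Types u v : 'cV[R]_m.

Lemma enorm_ge0 v : 0 <= enorm v.
Proof. exact: sqrtr_ge0. Qed.

Lemma enorm0 : enorm (0 : 'cV[R]_m) = 0.
Proof. by rewrite /enorm big1 ?sqrtr0 // => i _; rewrite mxE expr0n. Qed.

Lemma enormD u v : enorm (u + v) <= enorm u + enorm v.
Proof.
rewrite /enorm.
set Su := \sum_i u i 0 ^+ 2; set Sv := \sum_i v i 0 ^+ 2.
set Suv := \sum_i u i 0 * v i 0.
have Su0 : 0 <= Su by apply: sumr_ge0 => i _; exact: sqr_ge0.
have Sv0 : 0 <= Sv by apply: sumr_ge0 => i _; exact: sqr_ge0.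
have expand : \sum_i (u + v) i 0 ^+ 2 = Su + 2 * Suv + Sv.
  rewrite /Su /Suv /Sv mulr_sumr -!big_split /=; apply: eq_bigr => i _.
  rewrite mxE; ring.
have cauchy_schwarz : Suv <= Num.sqrt Su * Num.sqrt Sv.
  rewrite -sqrtrM //; apply: le_trans (ler_norm Suv) _.
  by rewrite -sqrtr_sqr ler_wsqrtr // sum_mul_sqr_le.
rewrite expand -[X in _ <= X]ger0_norm ?addr_ge0 ?sqrtr_ge0 //.
rewrite -sqrtr_sqr ler_wsqrtr // sqrrD !sqr_sqrtr //; lra.
Qed.

Lemma enorm_le_subD u v : enorm u <= enorm (u - v) + enorm v.
Proof. by rewrite -{1}(subrK v u) enormD. Qed.

End EuclideanNorm.

Lemma opnorm_ge0 (R : realType) (p q : nat) (A : 'M[R]_(p, q)) :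
  0 <= opnorm A.
Proof.
rewrite /opnorm; set E := (X in sup X).
have [hs|nhs] := pselect (has_sup E); last by rewrite sup_out.
have [[e Ee] _] := hs; apply: le_trans (sup_upper_bound hs Ee).
by case: Ee => v _ <-; exact: enorm_ge0.
Qed.

Lemma obj_ge0 (R : realType) (n d : nat) (r : 'cV[R]_d -> 'cV[R]_n) x :
  0 <= obj r x.
Proof. by rewrite /obj mulr_ge0 ?invr_ge0 ?sqr_ge0. Qed.

Section FullyLinear.
Variables (R : realType) (n d : nat) (r : 'cV[R]_d -> 'cV[R]_n).
Variables (kef keg : R) (rt : 'cV[R]_n) (J : 'M[R]_(n, d)) (th : 'cV[R]_d).

Lemma fully_linear_grad_le D : 0 <= D -> fully_linear r kef keg rt J th D ->
  enorm (grad (obj r) th) <= enorm (gmdl rt J) + keg * D.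
Proof.
move=> D_ge0 /(_ 0); rewrite enorm0 => /(_ D_ge0)[_].
rewrite addr0 /grad_mdl mulmx0 addr0 => grad_err.
have := enorm_le_subD (grad (obj r) th) (gmdl rt J); lra.
Qed.

Lemma fully_linear_max_ge e D : 0 <= keg -> 0 <= D ->
  fully_linear r kef keg rt J th D -> e <= enorm (grad (obj r) th) ->
  e / (keg + 1) <= Num.max (enorm (gmdl rt J)) D.
Proof.
move=> keg_ge0 D_ge0 FLD e_le; rewrite ler_pdivrMr; last lra.
have := fully_linear_grad_le D_ge0 FLD.
set M := Num.max _ _.
have g_le : enorm (gmdl rt J) <= M by rewrite le_max lexx.
have D_le : D <= M by rewrite le_max lexx orbT.
have : keg * D <= keg * M by exact: ler_wpM2l.
lra.
Qed.

End FullyLinear.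

Lemma card_mul_le_of_decrease (R : realDomainType) (f : nat -> R)
    (S : pred nat) (c : R) (N : nat) :
  (forall k, (k < N)%N -> (if S k then c else 0) <= f k - f k.+1) ->
  0 <= f N -> #|[set k : 'I_N | S k]|%:R * c <= f 0.
Proof.
move=> decr fN_ge0.
have telescope : \sum_(k < N) (f k - f k.+1) = f 0 - f N.
  elim: N {decr fN_ge0} => [|N IH]; first by rewrite big_ord0 subrr.
  by rewrite big_ord_recr /= IH addrA subrK.
have -> : #|[set k : 'I_N | S k]|%:R * c = \sum_(k < N) (if S k then c else 0).
  rewrite -sum1_card natr_sum mulr_suml big_mkcond /=; apply: eq_bigr => k _.
  by rewrite inE; case: (S k); rewrite ?mul1r ?mul0r.
have : \sum_(k < N) (if S k then c else 0) <= \sum_(k < N) (f k - f k.+1).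
  by apply: ler_sum => k _; exact: decr.
lra.
Qed.

Lemma params_ok_eta1' (R : realType) (P : dfo_params R) : params_ok P ->
  2 * eta1' P < eta1 P /\ 2 * eta1' P < 1 - eta2 P.
Proof.
case=> _ [_ [_ [_ [_ [_ [_ [eta1'_lt _]]]]]]].
have min_le1 : Num.min (eta1 P) (1 - eta2 P) <= eta1 P by rewrite ge_min lexx.
have min_le2 : Num.min (eta1 P) (1 - eta2 P) <= 1 - eta2 P.
  by rewrite ge_min lexx orbT.
lra.
Qed.

Section Constants.
Variables (R : realType) (P : dfo_params R) (kH Delta0 : R).
Hypotheses (gdec_gt0 : 0 < gdec P) (gdec_lt1 : gdec P < 1).
Hypotheses (eta1'_lt_eta2 : 2 * eta1' P < 1 - eta2 P).
Hypotheses (eps_gt0 : 0 < eps P) (kef_gt0 : 0 < kef P) (keg_ge0 : 0 <= keg P).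
Hypotheses (kH_gt0 : 0 < kH) (Delta0_gt0 : 0 < Delta0).

Local Notation eps_g := (eps P / (keg P + 1)).

Lemma c0_gt0 : 0 < c0 P kH.
Proof.
rewrite lt_min invr_gt0 kH_gt0 andbT divr_gt0 //.
  by have := eta1'_lt_eta2; lra.
by have := kef_gt0; lra.
Qed.

Lemma c0_mul_kH_le1 : c0 P kH * kH <= 1.
Proof. by rewrite -ler_pdivlMr // div1r ge_min lexx orbT. Qed.

Lemma c0_mul_kef_le : c0 P kH * (4 * kef P) <= 1 - eta2 P - 2 * eta1' P.
Proof. by rewrite -ler_pdivlMr ?ge_min ?lexx //; have := kef_gt0; lra. Qed.

Lemma Dmin_gt0 : 0 < Dmin P kH Delta0.
Proof.
have keg1_gt0 : 0 < keg P + 1 by have := keg_ge0; lra.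
by rewrite /Dmin mulr_gt0 // !lt_min Delta0_gt0 !divr_gt0 ?mulr_gt0 ?c0_gt0.
Qed.

Lemma Dmin_le : [/\ Dmin P kH Delta0 <= Delta0,
  Dmin P kH Delta0 <= gdec P * eps_g,
  Dmin P kH Delta0 <= gdec P * (c0 P kH * eps_g) &
  Dmin P kH Delta0 <= c0 P kH * eps_g].
Proof.
have -> : Dmin P kH Delta0 =
    gdec P * Num.min Delta0 (Num.min (c0 P kH * eps_g) (gdec P * eps_g)).
  by rewrite /Dmin !mulrA.
set a := Num.min _ _.
have eps_g_gt0 : 0 < eps_g by rewrite divr_gt0 //; have := keg_ge0; lra.
have a_ge0 : 0 <= a.
  rewrite !le_min (ltW Delta0_gt0) /=.
  by apply/andP; split; rewrite mulr_ge0 ?ltW ?c0_gt0.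
have a_le0 : a <= Delta0 by rewrite ge_min lexx.
have a_le1 : a <= c0 P kH * eps_g by rewrite !ge_min lexx orbT.
have a_le2 : a <= gdec P * eps_g by rewrite !ge_min lexx !orbT.
have ga_le : gdec P * a <= a by rewrite ler_piMl // ltW.
have ga_le1 : gdec P * a <= gdec P * (c0 P kH * eps_g) by rewrite ler_pM2l.
split; lra.
Qed.

End Constants.

Section DfoRun.
Variables (R : realType) (n d : nat) (r : 'cV[R]_d -> 'cV[R]_n).
Variables (P : dfo_params R) (th0 : 'cV[R]_d) (Delta0 kH : R).
Variables (T : dfo_trace R n d) (keps : nat).
Hypotheses (gdec_gt0 : 0 < gdec P) (gdec_lt1 : gdec P < 1).
Hypotheses (ginc_ge1 : 1 <= ginc P) (eta1_le_eta2 : eta1 P <= eta2 P).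
Hypotheses (eta1'_gt0 : 0 < eta1' P) (eta1'_lt_eta1 : 2 * eta1' P < eta1 P).
Hypotheses (eta1'_lt_eta2 : 2 * eta1' P < 1 - eta2 P).
Hypotheses (eps_gt0 : 0 < eps P) (kef_gt0 : 0 < kef P) (keg_ge0 : 0 <= keg P).
Hypotheses (Delta0_gt0 : 0 < Delta0) (Delta0_le_Dmax : Delta0 <= Dmax P).
Hypotheses (run : dfo_run r P T th0 Delta0) (HB : assumptionB T kH).
Hypothesis grad_ge_eps :
  forall k, (k <= keps)%N -> eps P <= enorm (grad (obj r) (th T k)).

Local Notation eps_g := (eps P / (keg P + 1)).
Local Notation cH := (c0 P kH).
Local Notation Delta_min := (Dmin P kH Delta0).

Let cauchy_decrease k : 2^-1 * enorm (gk T k) *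
    Num.min (D T k) (enorm (gk T k) / (opnorm (Hk T k) + 1)) <= pred_decr T k.
Proof. by case: HB => /(_ k). Qed.
Let opnorm_Hk_le k : opnorm (Hk T k) + 1 <= kH.
Proof. by case: HB => _ [_ /(_ k)]. Qed.
Let kH_gt0 : 0 < kH. Proof. by case: HB => _ [kH_ge1 _]; lra. Qed.

Let iteration k := proj2 (proj2 run) k.

Let criticality_exit k :
  enorm (gk T k) <= eps P -> FL r P T k /\ D T k <= enorm (gk T k).
Proof. by case: (iteration k) => _ [_ []]. Qed.
Let step_le k : enorm (s T k) <= D T k.
Proof. by case: (iteration k) => _ [_ [_ []]]. Qed.
Let obj_acc k : `|mk T k 0 - obj r (th T k)| <= eta1' P * pred_decr T k.
Proof. by case: (iteration k) => _ [_ [_ [_ []]]]. Qed.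
Let obj_step_acc k :
  `|fp T k - obj r (th T k + s T k)| <= eta1' P * pred_decr T k.
Proof. by case: (iteration k) => _ [_ [_ [_ [_ []]]]]. Qed.
Let th_next k :
  th T k.+1 = if `[< successful r P T k >] then th T k + s T k else th T k.
Proof. by case: (iteration k) => _ [_ [_ [_ [_ [_ []]]]]]. Qed.

Let eps_g_gt0 : 0 < eps_g. Proof. by rewrite divr_gt0 //; have := keg_ge0; lra. Qed.
Let cH_gt0 : 0 < cH := c0_gt0 eta1'_lt_eta2 kef_gt0 kH_gt0.
Let cH_kH_le1 : cH * kH <= 1 := c0_mul_kH_le1 P kH_gt0.
Let cH_kef_le : cH * (4 * kef P) <= 1 - eta2 P - 2 * eta1' P :=
  c0_mul_kef_le kH kef_gt0.
Let Delta_min_gt0 : 0 < Delta_min :=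
  Dmin_gt0 gdec_gt0 eta1'_lt_eta2 eps_gt0 kef_gt0 keg_ge0 kH_gt0 Delta0_gt0.
Let Delta_min_bounds := Dmin_le gdec_gt0 gdec_lt1 eta1'_lt_eta2 eps_gt0
  kef_gt0 keg_ge0 kH_gt0 Delta0_gt0.

Let eps_g_le : eps_g <= eps P.
Proof.
rewrite ler_pdivrMr; last by have := keg_ge0; lra.
by rewrite ler_peMr ?(ltW eps_gt0) //; have := keg_ge0; lra.
Qed.

Lemma model_grad_ge k : (k <= keps)%N -> 0 <= D T k ->
  eps_g <= enorm (gk T k).
Proof.
move=> k_le D_ge0; have [g_le|g_gt] := leP (enorm (gk T k)) (eps P).
  have [FLk D_le] := criticality_exit g_le.
  have := fully_linear_max_ge keg_ge0 D_ge0 FLk (grad_ge_eps k_le).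
  by rewrite max_l.
by have := eps_g_le; lra.
Qed.

Lemma radius_ge_after_criticality k : (k <= keps)%N ->
  Num.min (D0 T k) (gdec P * eps_g) <= D T k.
Proof.
move=> k_le; have [_ [[i [-> chain]] _]] := iteration k.
case: i chain => [|j] chain; first by rewrite expr0 mul1r ge_min lexx.
have [rt' [J' [FLj [_ g_lt]]]] := chain j (ltnSn j).
rewrite exprS -mulrA; set Dj := gdec P ^+ j * D0 T k in FLj g_lt *.
have Dj_ge0 : 0 <= Dj := le_trans (enorm_ge0 _) (ltW g_lt).
have := fully_linear_max_ge keg_ge0 Dj_ge0 FLj (grad_ge_eps k_le).
rewrite max_r ?(ltW g_lt) // => eps_g_le_Dj.
by rewrite ge_min ler_pM2l // eps_g_le_Dj orbT.
Qed.

Lemma pred_decr_ge k x : 0 <= x -> x <= D T k -> x * kH <= enorm (gk T k) ->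
  2^-1 * enorm (gk T k) * x <= pred_decr T k.
Proof.
move=> x_ge0 x_le xkH_le; apply: le_trans (cauchy_decrease k).
apply: ler_wpM2l; first by rewrite mulr_ge0 ?invr_ge0 ?enorm_ge0.
have h_gt0 : 0 < opnorm (Hk T k) + 1 by have := opnorm_ge0 (Hk T k); lra.
rewrite le_min x_le ler_pdivlMr //.
have : x * (opnorm (Hk T k) + 1) <= x * kH by rewrite ler_wpM2l ?opnorm_Hk_le.
lra.
Qed.

Lemma very_successful_small_radius k : FL r P T k -> 0 < D T k ->
  D T k <= cH * enorm (gk T k) -> eta2 P <= rho T k.
Proof.
move=> FLk D_gt0 D_le; rewrite /rho.
set G := enorm (gk T k) in D_le *; set p := pred_decr T k.
have G_gt0 : 0 < G by rewrite -(pmulr_rgt0 _ cH_gt0); lra.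
have p_ge : 2^-1 * G * D T k <= p.
  apply: pred_decr_ge (ltW D_gt0) (lexx _) _; rewrite -/G.
  have : cH * G * kH <= G by rewrite mulrAC ler_piMl ?enorm_ge0.
  have : D T k * kH <= cH * G * kH by rewrite ler_pM2r.
  lra.
have p_gt0 : 0 < p by apply: lt_le_trans p_ge; rewrite !mulr_gt0 ?invr_gt0.
have model_err :
    `|obj r (th T k + s T k) - mk T k (s T k)| <= kef P * D T k ^+ 2.
  exact: (FLk _ (step_le k)).1.
have quad_le : kef P * D T k ^+ 2 <= kef P * (D T k * (cH * G)).
  by rewrite expr2 ler_pM2l // ler_pM2l.
have c_le : kef P * cH * (G * D T k) <= kef P * cH * (2 * p).
  by rewrite ler_pM2l ?mulr_gt0 //; lra.
have cp_le : cH * (4 * kef P) * p <= (1 - eta2 P - 2 * eta1' P) * p.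
  by rewrite ler_pM2r // cH_kef_le.
move: model_err (obj_step_acc k); rewrite -/p !ler_norml.
move=> /andP[m1 m2] /andP[a1 a2].
rewrite ler_pdivlMr //.
have pE : p = mk T k 0 - mk T k (s T k) by [].
have := eta1'_gt0; have := eta1'_lt_eta2; lra.
Qed.

Lemma radius_ge_of_start k : (k <= keps)%N ->
  Delta_min <= D0 T k -> Delta_min <= D T k.
Proof.
move=> k_le D0_ge; apply: le_trans (radius_ge_after_criticality k_le).
by have [_ Dm_le _ _] := Delta_min_bounds; rewrite le_min D0_ge.
Qed.

Lemma radius_next_start_ge k : (k <= keps)%N ->
  Delta_min <= D T k -> Delta_min <= D0 T k.+1.
Proof.
move=> k_le D_ge; have [Dm_le_Delta0 _ Dm_le_c _] := Delta_min_bounds.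
have D_gt0 : 0 < D T k := lt_le_trans Delta_min_gt0 D_ge.
have [_ [_ [_ [_ [_ [_ [_ ->]]]]]]] := iteration k.
case: ifP => [_|not_very].
  rewrite le_min (le_trans Dm_le_Delta0 Delta0_le_Dmax) andbT.
  exact: le_trans D_ge (ler_peMl (ltW D_gt0) ginc_ge1).
case: ifP => [_|/negbFE/asboolP FLk]; first exact: D_ge.
have c_le : cH * eps_g <= D T k.
  rewrite leNgt; apply/negP => D_lt; move: not_very.
  suff -> : eta2 P <= rho T k by [].
  apply: (very_successful_small_radius FLk D_gt0).
  have : cH * eps_g <= cH * enorm (gk T k).
    by rewrite ler_pM2l //; exact: model_grad_ge k_le (ltW D_gt0).
  lra.
by apply: le_trans Dm_le_c _; rewrite ler_pM2l.
Qed.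

Lemma radius_ge_Dmin k : (k <= keps)%N -> Delta_min <= D T k.
Proof.
move=> k_le; apply: (radius_ge_of_start k_le).
elim: k k_le => [|k IH] k_le.
  by case: run => _ [-> _]; have [] := Delta_min_bounds.
have k_le' := ltnW k_le.
exact: radius_next_start_ge k_le' (radius_ge_of_start k_le' (IH k_le')).
Qed.

Lemma obj_decrease k : (k <= keps)%N ->
  (if `[< successful r P T k >]
   then (eta1 P - 2 * eta1' P) / 2 * eps_g * Delta_min else 0)
  <= obj r (th T k) - obj r (th T k.+1).
Proof.
move=> k_le; rewrite th_next.
case: ifP => [/asboolP succ|_]; last by rewrite subrr.
have [_ _ _ Dm_le_c] := Delta_min_bounds.
have D_ge := radius_ge_Dmin k_le.
have G_ge := model_grad_ge k_le (le_trans (ltW Delta_min_gt0) D_ge).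
have rho_ge : eta1 P <= rho T k.
  by case: succ => [|[] //]; exact: le_trans eta1_le_eta2.
move: rho_ge; rewrite /rho; set p := pred_decr T k => rho_ge.
have p_ge : 2^-1 * eps_g * Delta_min <= p.
  apply: le_trans (pred_decr_ge (ltW Delta_min_gt0) D_ge _).
    by rewrite ler_pM2r ?Delta_min_gt0 // ler_pM2l // invr_gt0.
  have : Delta_min * kH <= cH * eps_g * kH by rewrite ler_pM2r.
  have : cH * eps_g * kH <= eps_g.
    by rewrite mulrAC; exact: ler_piMl (ltW eps_g_gt0) cH_kH_le1.
  lra.
have p_gt0 : 0 < p.
  apply: lt_le_trans p_ge.
  by rewrite mulr_gt0 ?Delta_min_gt0 // mulr_gt0 // invr_gt0.
move: rho_ge; rewrite ler_pdivlMr // => rho_ge.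
move: (obj_acc k) (obj_step_acc k); rewrite -/p !ler_norml.
move=> /andP[a1 a2] /andP[b1 b2].
have : (eta1 P - 2 * eta1' P) * (2^-1 * eps_g * Delta_min)
       <= (eta1 P - 2 * eta1' P) * p.
  by rewrite ler_pM2l // subr_gt0.
lra.
Qed.

Lemma card_successful_mul_le :
  #|[set k : 'I_keps.+1 | `[< successful r P T k >]]|%:R
    * ((eta1 P - 2 * eta1' P) / 2 * eps_g * Delta_min) <= obj r th0.
Proof.
case: run => <- _.
apply: (card_mul_le_of_decrease (f := fun k => obj r (th T k))
  (S := fun k => `[< successful r P T k >]) _ (obj_ge0 r _)) => k.
rewrite ltnS; exact: obj_decrease.
Qed.

End DfoRun.

Theorem proposition1 (R : realType) (n d : nat) (r : 'cV[R]_d -> 'cV[R]_n)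
  (P : dfo_params R) (th0 : 'cV[R]_d) (Delta0 LJ kH : R)
  (T : dfo_trace R n d) (keps : nat) :
  (1 <= n)%N -> (1 <= d)%N ->
  params_ok P -> 0 < Delta0 -> Delta0 <= Dmax P ->
  dfo_run r P T th0 Delta0 ->
  assumptionA r P th0 LJ ->
  assumptionB T kH ->
  (forall k, (k <= keps)%N -> eps P <= enorm (grad (obj r) (th T k))) ->
  enorm (grad (obj r) (th T keps.+1)) < eps P ->
  (#|[set k : 'I_keps.+1 | `[< successful r P T k >]]|)%:R
    <= 2 * (keg P + 1) * obj r th0
       / ((eta1 P - 2 * eta1' P) * eps P * Dmin P kH Delta0).
Proof.
(* Assumption A (and n, d >= 1) only serves to build the fully linear models,
   whose existence is already recorded in [dfo_run]. *)
move=> _ _ Pok Delta0_gt0 Delta0_le run _ HB grad_ge _.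
have [eta1'_lt_eta1 eta1'_lt_eta2] := params_ok_eta1' Pok.
case: Pok => _ [/andP[gdec_gt0 gdec_lt1] [/ltW ginc_ge1 [_ [eta1_le_eta2
  [_ [eta1'_gt0 [_ [eps_gt0 [kef_gt0 /ltW keg_ge0]]]]]]]]].
have kH_gt0 : 0 < kH by case: HB => _ [kH_ge1 _]; lra.
have count := card_successful_mul_le gdec_gt0 gdec_lt1 ginc_ge1 eta1_le_eta2
  eta1'_gt0 eta1'_lt_eta1 eta1'_lt_eta2 eps_gt0 kef_gt0 keg_ge0
  Delta0_gt0 Delta0_le run HB grad_ge.
have Dmin_pos := Dmin_gt0 gdec_gt0 eta1'_lt_eta2 eps_gt0 kef_gt0 keg_ge0
  kH_gt0 Delta0_gt0.
have den_gt0 : 0 < (eta1 P - 2 * eta1' P) * eps P * Dmin P kH Delta0.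
  by rewrite mulr_gt0 // mulr_gt0 // subr_gt0.
rewrite ler_pdivlMr //.
set C := (#|_|)%:R in count *.
have -> : C * ((eta1 P - 2 * eta1' P) * eps P * Dmin P kH Delta0) =
    2 * (keg P + 1) * (C * ((eta1 P - 2 * eta1' P) / 2 *
      (eps P / (keg P + 1)) * Dmin P kH Delta0)).
  by field; rewrite lt0r_neq0 //; lra.
by rewrite ler_wpM2l //; lra.
Qed.
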